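(* Let $k\neq0$ and $n\neq0,1$ be real and $p=4/n$. Consider the first-order system (the inversion-group resolving system) $$(2+n/2)G+xG_x-(n/2)(vG_v+\bar vG_{\bar v})+GH_v-HG_v+\bar GH_{\bar v}-\bar HG_{\bar v}=0,$$ $$iG+(2-n/2)H+xH_x-(n/2)(vH_v+\bar vH_{\bar v})-HH_v-\bar HH_{\bar v}=kv^{1+2/n}\bar v^{2/n}$$ for complex functions $G(x,v,\bar v)$, $H(x,v,\bar v)$. The following are phase-equivariant solutions ($C_j$ constants; upper/lower signs taken together): \begin{enumerate} \item $H=0$, $G=-ik|v|^{4/n}v$; \item $H=iC_1x^{-1}|v|^{2/n}v$, $G=\big(iC_1^2x^{-2}|v|^{4/n}+C_1nx^{-1}|v|^{2/n}-ik|v|^{4/n}\big)v$, with $C_1\neq0$; \item $H=\big(2/3\pm i\sqrt{-k}|v|^{3/2}\big)v$, $G=\big(\pm(8/3)\sqrt{-k}|v|^{3/2}-2ik|v|^3\big)v$, with $n=4/3$, $k<0$; \item $H=\big(2-n\pm\sqrt{-kn/(n+2)}|v|^{2/n}\big)v$, $G=0$, with $n^2-n-4=0$, $kn<0$; \item $H=\big(2-n\pm i\sqrt{k}|v|^{2/n}\big)v$, $G=0$, with $n^2-n-4=0$, $k>0$; \item $H=(C_1x^{-4}+k/4)|v|^{-1}v$, $G=0$, with $n=-4$; \item $H=\big((1+C_1x^6)^{-1}(6+(k/4)(C_2x^2-3)|v|^{-1})+(k/4)|v|^{-1}\big)v$, $G=0$, with $n=-4$; \item $H=\sqrt{C_1}\Big(x\big(C_2J_3(\sqrt{C_1}/x)+C_3Y_3(\sqrt{C_1}/x)\big)\Big)^{-1}\Big(\big(C_2J_2(\sqrt{C_1}/x)+C_3Y_2(\sqrt{C_1}/x)\big)\big(1+(k/C_1)x^2|v|^{-1}\big)+C_4|v|^{-1}\Big)v$,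 $G=iC_1x^{-2}v$, with $n=-4$, $C_1>0$; \item $H=\sqrt{C_1}\Big(x\big(C_2I_3(\sqrt{C_1}/x)+C_3e^{3i\pi}K_3(\sqrt{C_1}/x)\big)\Big)^{-1}\Big(\big(C_2I_2(\sqrt{C_1}/x)+C_3e^{2i\pi}K_2(\sqrt{C_1}/x)\big)\big(1-(k/C_1)x^2|v|^{-1}\big)+C_4|v|^{-1}\Big)v$, $G=-iC_1x^{-2}v$, with $n=-4$, $C_1>0$. \end{enumerate} Only solutions 4 through 7 satisfy $G=0$.
   Context: $i$ is the imaginary unit; $x$ is real and $v,\bar v$ are a complex-conjugate pair treated as independent variables; $\bar G,\bar H$ are complex conjugates of $G,H$. A solution is phase-equivariant if $G=g(x,|v|)v$, $H=h(x,|v|)v$. $J_\nu,Y_\nu$ are Bessel functions and $I_\nu,K_\nu$ modified Bessel functions. *)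

From Stdlib Require Import Reals Arith Factorial.
From Coquelicot Require Import Coquelicot.
Open Scope R_scope.

Definition Cdiff (f : R -> C) (t0 : R) : Prop :=
  ex_derive (fun t => Re (f t)) t0 /\ ex_derive (fun t => Im (f t)) t0.

Definition Cder (f : R -> C) (t0 : R) : C :=
  (Derive (fun t => Re (f t)) t0, Derive (fun t => Im (f t)) t0).

(* Functions F(x, v) with x real and v = a + i b complex.  Writing
   F(x,v,vbar) with v, vbar independent means the Wirtinger derivatives
   F_v = (F_a - i F_b)/2 and F_vbar = (F_a + i F_b)/2. *)
Definition Dx (F : R -> C -> C) (x : R) (v : C) : C := Cder (fun t => F t v) x.
Definition Da (F : R -> C -> C) (x : R) (v : C) : C :=
  Cder (fun t => F x (v + RtoC t)%C) 0.
Definition Db (F : R -> C -> C) (x : R) (v : C) : C :=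
  Cder (fun t => F x (v + Ci * RtoC t)%C) 0.
Definition Dv (F : R -> C -> C) (x : R) (v : C) : C :=
  (/ 2 * (Da F x v - Ci * Db F x v))%C.
Definition Dvb (F : R -> C -> C) (x : R) (v : C) : C :=
  (/ 2 * (Da F x v + Ci * Db F x v))%C.

Definition has_partials (F : R -> C -> C) (x : R) (v : C) : Prop :=
  Cdiff (fun t => F t v) x /\
  Cdiff (fun t => F x (v + RtoC t)%C) 0 /\
  Cdiff (fun t => F x (v + Ci * RtoC t)%C) 0.

Definition Fconj (F : R -> C -> C) : R -> C -> C := fun x v => Cconj (F x v).

Definition eq1_lhs (n : R) (G H : R -> C -> C) (x : R) (v : C) : C :=
  (RtoC (2 + n / 2) * G x v + RtoC x * Dx G x v
   - RtoC (n / 2) * (v * Dv G x v + Cconj v * Dvb G x v)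
   + G x v * Dv H x v - H x v * Dv G x v
   + Fconj G x v * Dvb H x v - Fconj H x v * Dvb G x v)%C.

Definition eq2_lhs (n : R) (G H : R -> C -> C) (x : R) (v : C) : C :=
  (Ci * G x v + RtoC (2 - n / 2) * H x v + RtoC x * Dx H x v
   - RtoC (n / 2) * (v * Dv H x v + Cconj v * Dvb H x v)
   - H x v * Dv H x v - Fconj H x v * Dvb H x v)%C.

(* right-hand side  k v^(1+2/n) vbar^(2/n) = k |v|^(4/n) v  *)
Definition eq2_rhs (n k : R) (v : C) : C :=
  (RtoC (k * Rpower (Cmod v) (4 / n)) * v)%C.

Definition solves (n k : R) (G H : R -> C -> C) (D : R -> C -> Prop) : Prop :=
  forall x v, D x v ->
    has_partials G x v /\ has_partials H x v /\
    eq1_lhs n G H x v = 0%C /\ eq2_lhs n G H x v = eq2_rhs n k v.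

Definition peq (f : R -> R -> C) : R -> C -> C := fun x v => (f x (Cmod v) * v)%C.

(** * Bessel functions of integer order (DLMF 10.2.2, 10.8.1, 10.25.2, 10.31.1) *)

Definition Euler_gamma : R :=
  real (Lim_seq (fun N => sum_f_R0 (fun j => / INR (S j)) N - ln (INR (S N)))).

Definition finite_sum (f : nat -> R) (N : nat) : R :=
  match N with O => 0 | S N' => sum_f_R0 f N' end.

(* digamma at positive integers:  psi(m+1) = -gamma + sum_{j=1}^m 1/j *)
Definition psi1 (m : nat) : R :=
  - Euler_gamma + finite_sum (fun j => / INR (S j)) m.

Definition BesselJ (nu : nat) (z : R) : R :=
  Series (fun m => (-1) ^ m / (INR (fact m) * INR (fact (m + nu))) * (z / 2) ^ (2 * m + nu)).

Definition BesselI (nu : nat) (z : R) : R :=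
  Series (fun m => / (INR (fact m) * INR (fact (m + nu))) * (z / 2) ^ (2 * m + nu)).

Definition BesselY (nu : nat) (z : R) : R :=
  - (/ (z / 2) ^ nu) / PI *
      finite_sum (fun j => INR (fact (nu - j - 1)) / INR (fact j) * (z ^ 2 / 4) ^ j) nu
  + 2 / PI * ln (z / 2) * BesselJ nu z
  - (z / 2) ^ nu / PI *
      Series (fun j => (psi1 j + psi1 (nu + j)) * (- z ^ 2 / 4) ^ j
                         / (INR (fact j) * INR (fact (nu + j)))).

Definition BesselK (nu : nat) (z : R) : R :=
  / 2 * / (z / 2) ^ nu *
      finite_sum (fun j => INR (fact (nu - j - 1)) / INR (fact j) * (- z ^ 2 / 4) ^ j) nu
  + (-1) ^ (S nu) * ln (z / 2) * BesselI nu z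
  + (-1) ^ nu * / 2 * (z / 2) ^ nu *
      Series (fun j => (psi1 j + psi1 (nu + j)) * (z ^ 2 / 4) ^ j
                         / (INR (fact j) * INR (fact (nu + j)))).

Definition Cexpi (t : R) : C := (cos t, sin t).

Definition G1 (n k : R) := peq (fun x r => (- Ci * RtoC (k * Rpower r (4 / n)))%C).
Definition H1 : R -> C -> C := fun _ _ => 0%C.
Definition D1 : R -> C -> Prop := fun x v => v <> 0%C.

Definition H2 (n C1 : R) := peq (fun x r => (Ci * RtoC (C1 / x * Rpower r (2 / n)))%C).
Definition G2 (n k C1 : R) := peq (fun x r =>
  (Ci * RtoC (C1 ^ 2 / x ^ 2 * Rpower r (4 / n)) + RtoC (C1 * n / x * Rpower r (2 / n))
   - Ci * RtoC (k * Rpower r (4 / n)))%C).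
Definition D2 : R -> C -> Prop := fun x v => x <> 0 /\ v <> 0%C.

(* 3  (n = 4/3, k < 0; s = +1 or -1 selects the upper/lower signs) *)
Definition H3 (k s : R) := peq (fun x r =>
  (RtoC (2 / 3) + Ci * RtoC (s * sqrt (- k) * Rpower r (3 / 2)))%C).
Definition G3 (k s : R) := peq (fun x r =>
  (RtoC (s * (8 / 3) * sqrt (- k) * Rpower r (3 / 2)) - Ci * RtoC (2 * k * r ^ 3))%C).
Definition D3 : R -> C -> Prop := fun x v => v <> 0%C.

Definition H4 (n k s : R) := peq (fun x r =>
  RtoC (2 - n + s * sqrt (- k * n / (n + 2)) * Rpower r (2 / n))).
Definition H5 (n k s : R) := peq (fun x r =>
  (RtoC (2 - n) + Ci * RtoC (s * sqrt k * Rpower r (2 / n)))%C).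
Definition H6 (k C1 : R) := peq (fun x r => RtoC ((C1 / x ^ 4 + k / 4) / r)).
Definition D6 : R -> C -> Prop := fun x v => x <> 0 /\ v <> 0%C.
Definition H7 (k C1 C2 : R) := peq (fun x r =>
  RtoC (/ (1 + C1 * x ^ 6) * (6 + k / 4 * (C2 * x ^ 2 - 3) / r) + k / 4 / r)).
Definition D7 (C1 : R) : R -> C -> Prop := fun x v => 1 + C1 * x ^ 6 <> 0 /\ v <> 0%C.

Definition Gzero : R -> C -> C := fun _ _ => 0%C.
Definition Dv0 : R -> C -> Prop := fun x v => v <> 0%C.

Definition den8 (C1 C2 C3 x : R) : R :=
  x * (C2 * BesselJ 3 (sqrt C1 / x) + C3 * BesselY 3 (sqrt C1 / x)).
Definition H8 (k C1 C2 C3 C4 : R) := peq (fun x r =>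
  RtoC (sqrt C1 / den8 C1 C2 C3 x *
        ((C2 * BesselJ 2 (sqrt C1 / x) + C3 * BesselY 2 (sqrt C1 / x))
           * (1 + k / C1 * x ^ 2 / r) + C4 / r))).
Definition G8 (C1 : R) := peq (fun x r => (Ci * RtoC (C1 / x ^ 2))%C).
Definition D8 (C1 C2 C3 : R) : R -> C -> Prop :=
  fun x v => 0 < x /\ v <> 0%C /\ den8 C1 C2 C3 x <> 0.

Definition den9 (C1 C2 C3 x : R) : C :=
  (RtoC x * (RtoC (C2 * BesselI 3 (sqrt C1 / x))
             + RtoC C3 * Cexpi (3 * PI) * RtoC (BesselK 3 (sqrt C1 / x))))%C.
Definition H9 (k C1 C2 C3 C4 : R) := peq (fun x r =>
  (RtoC (sqrt C1) / den9 C1 C2 C3 x *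
     ((RtoC (C2 * BesselI 2 (sqrt C1 / x))
       + RtoC C3 * Cexpi (2 * PI) * RtoC (BesselK 2 (sqrt C1 / x)))
        * RtoC (1 - k / C1 * x ^ 2 / r) + RtoC (C4 / r)))%C).
Definition G9 (C1 : R) := peq (fun x r => (- Ci * RtoC (C1 / x ^ 2))%C).
Definition D9 (C1 C2 C3 : R) : R -> C -> Prop :=
  fun x v => 0 < x /\ v <> 0%C /\ den9 C1 C2 C3 x <> 0%C.

Definition nowhere_zero (G : R -> C -> C) (D : R -> C -> Prop) : Prop :=
  forall x v, D x v -> G x v <> 0%C.

(* For a phase-equivariant function F = f(x, r) v with r = |v|, the Wirtinger derivatives are
   F_v = f + r f_r / 2 and F_vbar = v^2 f_r / (2 r) (use conj v * v = r^2), so both equations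
   of the system become v times equations in (x, r) alone ([reduced_eq1], [reduced_eq2]).

   For n = -4, G = i c x^-2 v and H = (A(x) + B(x)/r) v, the system reduces to the Riccati
   equation x A' = A^2 - 6 A + c / x^2 and the linear equation x B' = A B - 4 B + k.  The
   substitution A = sqrt C1 Z2(w) / (x Z3(w)), w = sqrt C1 / x, solves both as soon as
   Z3' = Z2 - 3 Z3 / w and Z2' = sg Z3 + 2 Z2 / w, with sg = -1 for combinations of J and Y
   and sg = 1 for combinations of I and K.  These recurrences are checked on the power series,
   where they come down to (m + j) / (j! (j + m)!) = 1 / (j! (j + m - 1)!) and, for the
   logarithmic parts of Y and K, psi(m + 1) = psi(m) + 1/m. *)

From Pilot Require Import Defs.
From Stdlib Require Import Reals Nsatz Lra Lia Factorial FunctionalExtensionality.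
From Coquelicot Require Import Coquelicot.
Open Scope R_scope.
Set Bullet Behavior "Strict Subproofs".

Ltac nonzero := repeat match goal with
 | |- _ /\ _ => split
 | |- True => exact I
 | |- _ * _ <> 0 => apply Rmult_integral_contrapositive_currified
 | |- _ ^ _ <> 0 => apply pow_nonzero
 | |- / _ <> 0 => apply Rinv_neq_0_compat
 | |- 0 < _ => assumption
 | |- _ <> 0 => assumption
 | |- _ <> 0 => lra
 | |- 0 < _ => lra
 end.

Definition is_Cder (f : R -> C) (t0 : R) (d : C) : Prop :=
  is_derive (fun t => Re (f t)) t0 (Re d) /\ is_derive (fun t => Im (f t)) t0 (Im d).

Lemma is_derive_eq (f : R -> R) x d d' : is_derive f x d -> d = d' -> is_derive f x d'.
Proof. now intros H ->. Qed.

Lemma is_Cder_eq f t0 d d' : is_Cder f t0 d -> d = d' -> is_Cder f t0 d'.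
Proof. now intros H ->. Qed.

Lemma is_Cder_Cder f t0 d : is_Cder f t0 d -> Cdiff f t0 /\ Cder f t0 = d.
Proof.
  intros [hre him]. split; [split; eexists; eauto |].
  unfold Cder. apply injective_projections; apply is_derive_unique; assumption.
Qed.

Lemma is_Cder_const (c : C) t0 : is_Cder (fun _ => c) t0 0%C.
Proof. split; simpl; auto_derive; auto. Qed.

Lemma is_Cder_shift (v w : C) : is_Cder (fun t => v + w * RtoC t)%C 0 w.
Proof. destruct v, w; split; simpl; auto_derive; auto; ring. Qed.

Lemma is_Cder_ext f g t0 d : (forall t, f t = g t) -> is_Cder f t0 d -> is_Cder g t0 d.
Proof.
  intros e [hre him]; split; eapply is_derive_ext; eauto; intro t; simpl; now rewrite e.
Qed.

Lemma is_derive_Rmult (f g : R -> R) t0 df dg :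
  is_derive f t0 df -> is_derive g t0 dg ->
  is_derive (fun t => f t * g t) t0 (df * g t0 + f t0 * dg).
Proof. intros; apply (is_derive_mult f g); auto. intros; apply Rmult_comm. Qed.

Lemma is_Cder_mult f g t0 df dg : is_Cder f t0 df -> is_Cder g t0 dg ->
  is_Cder (fun t => f t * g t)%C t0 (df * g t0 + f t0 * dg)%C.
Proof.
  intros [fr fi] [gr gi]. split.
  - eapply is_derive_eq.
    + exact (is_derive_minus _ _ _ _ _
               (is_derive_Rmult _ _ _ _ _ fr gr) (is_derive_Rmult _ _ _ _ _ fi gi)).
    + simpl; unfold minus, plus, opp, Re, Im; simpl; ring.
  - eapply is_derive_eq.
    + exact (is_derive_plus _ _ _ _ _
               (is_derive_Rmult _ _ _ _ _ fr gi) (is_derive_Rmult _ _ _ _ _ fi gr)).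
    + simpl; unfold plus, Re, Im; simpl; ring.
Qed.

Lemma is_Cder_comp (f : R -> C) (u : R -> R) t0 df du :
  is_derive u t0 du -> is_Cder f (u t0) df ->
  is_Cder (fun t => f (u t)) t0 (RtoC du * df)%C.
Proof.
  intros hu [fr fi]. split; simpl.
  - eapply is_derive_eq; [exact (is_derive_comp (fun s => Re (f s)) u t0 _ _ fr hu) |].
    unfold scal, Re, Im; simpl; unfold mult; simpl; ring.
  - eapply is_derive_eq; [exact (is_derive_comp (fun s => Im (f s)) u t0 _ _ fi hu) |].
    unfold scal, Re, Im; simpl; unfold mult; simpl; ring.
Qed.

(** * Reduction of phase-equivariant solutions *)

Lemma Cmod_pos (v : C) : v <> 0%C -> 0 < Cmod v.
Proof. intros H; apply Cmod_gt_0, H. Qed.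

Lemma Cmod_mul_self (v : C) : Cmod v * Cmod v = Re v * Re v + Im v * Im v.
Proof.
  destruct v as [a b]. unfold Cmod; simpl.
  rewrite sqrt_sqrt by nra. ring.
Qed.

Lemma is_derive_Cmod_shift (v w : C) : v <> 0%C ->
  is_derive (fun t => Cmod (v + w * RtoC t)%C) 0 ((Re v * Re w + Im v * Im w) / Cmod v).
Proof.
  intros hv. pose proof (Cmod_pos v hv) as hr. pose proof (Cmod_mul_self v) as hr2.
  destruct v as [a b], w as [c d]. simpl in *.
  unfold Cmod at 1; simpl.
  auto_derive.
  - nra.
  - match goal with |- context [sqrt ?e] =>
      replace e with (Cmod (a, b) * Cmod (a, b)) by (rewrite hr2; ring) end.
    rewrite sqrt_square by lra. field. lra.
Qed.

Lemma is_Cder_peq_direction (f : R -> R -> C) x (v w fr : C) : v <> 0%C ->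
  is_Cder (f x) (Cmod v) fr ->
  is_Cder (fun t => peq f x (v + w * RtoC t)%C) 0
    (RtoC ((Re v * Re w + Im v * Im w) / Cmod v) * fr * v + f x (Cmod v) * w)%C.
Proof.
  intros hv hf.
  assert (e0 : (v + w * RtoC 0)%C = v) by (rewrite Cmult_0_r; apply Cplus_0_r).
  eapply is_Cder_eq.
  - apply is_Cder_mult; [| apply is_Cder_shift].
    apply (is_Cder_comp (f x) (fun t => Cmod (v + w * RtoC t)%C)).
    + apply is_derive_Cmod_shift, hv.
    + cbv beta. rewrite e0. exact hf.
  - cbv beta. now rewrite e0.
Qed.

Lemma peq_partials (f : R -> R -> C) x (v fx fr : C) : v <> 0%C ->
  is_Cder (fun t => f t (Cmod v)) x fx -> is_Cder (f x) (Cmod v) fr ->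
  has_partials (peq f) x v /\ Defs.Dx (peq f) x v = (fx * v)%C /\
  Dv (peq f) x v = (f x (Cmod v) + RtoC (Cmod v) * fr / 2)%C /\
  Dvb (peq f) x v = (fr * v * v / (2 * RtoC (Cmod v)))%C.
Proof.
  intros hv hx hr.
  assert (dx : is_Cder (fun t => peq f t v) x (fx * v)%C).
  { eapply is_Cder_eq; [apply is_Cder_mult; [exact hx | apply is_Cder_const] |].
    rewrite Cmult_0_r; apply Cplus_0_r. }
  pose proof (is_Cder_ext _ (fun t => peq f x (v + RtoC t)%C) _ _
    (fun t => f_equal (fun z => peq f x (v + z)%C) (Cmult_1_l (RtoC t)))
    (is_Cder_peq_direction f x v 1 fr hv hr)) as da.
  pose proof (is_Cder_peq_direction f x v Ci fr hv hr) as db.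
  destruct (is_Cder_Cder _ _ _ dx) as [cx ex].
  destruct (is_Cder_Cder _ _ _ da) as [ca ea].
  destruct (is_Cder_Cder _ _ _ db) as [cb eb].
  split; [split; [exact cx | split; [exact ca | exact cb]] |]. split; [exact ex |].
  unfold Dv, Dvb, Da, Db. rewrite ea, eb.
  pose proof (Cmod_pos v hv) as hpos. pose proof (Cmod_mul_self v) as hsq.
  set (r := Cmod v) in *. clearbody r.
  destruct v as [a b], fr as [p q], (f x r) as [u w]. simpl in hsq.
  split; apply injective_projections; simpl; field_simplify_eq; try lra.
  all: replace (r ^ 2) with (r * r) by ring; rewrite hsq; ring.
Qed.

Definition reduced_eq1 (n x r : R) (g gx gr h hr : C) : C :=
  (RtoC (2 + n / 2) * g + RtoC x * gx - RtoC (n / 2) * (g + RtoC r * gr)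
   + (g * hr - h * gr) * RtoC r / 2 + (Cconj g * hr - Cconj h * gr) * RtoC r / 2)%C.

Definition reduced_eq2 (n x r : R) (g h hx hr : C) : C :=
  (Ci * g + RtoC (2 - n / 2) * h + RtoC x * hx - RtoC (n / 2) * (h + RtoC r * hr)
   - h * (h + RtoC r * hr / 2) - Cconj h * hr * RtoC r / 2)%C.

Definition reduced_solution (n k : R) (g h : R -> R -> C) (x r : R) : Prop :=
  exists gx gr hx hr,
    is_Cder (fun t => g t r) x gx /\ is_Cder (g x) r gr /\
    is_Cder (fun t => h t r) x hx /\ is_Cder (h x) r hr /\
    reduced_eq1 n x r (g x r) gx gr (h x r) hr = 0%C /\
    reduced_eq2 n x r (g x r) (h x r) hx hr = RtoC (k * Rpower r (4 / n)).

Lemma Cconj_eq_Cmod_sq_div (v : C) : v <> 0%C -> Cconj v = (RtoC (Cmod v) * RtoC (Cmod v) / v)%C.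
Proof.
  intros hv. pose proof (Cmod2_conj v) as H.
  rewrite RtoC_pow in H. simpl in H. rewrite Cmult_1_r in H. rewrite H. field. exact hv.
Qed.

Lemma solves_peq n k (g h : R -> R -> C) (D : R -> C -> Prop) :
  (forall x v, D x v -> v <> 0%C /\ reduced_solution n k g h x (Cmod v)) ->
  solves n k (peq g) (peq h) D.
Proof.
  intros HD x v hD. destruct (HD x v hD) as [hv [gx [gr [hx [hr [dgx [dgr [dhx [dhr [e1 e2]]]]]]]]]].
  destruct (peq_partials g x v gx gr hv dgx dgr) as [pg [gX [gV gVb]]].
  destruct (peq_partials h x v hx hr hv dhx dhr) as [ph [hX [hV hVb]]].
  assert (hr0 : RtoC (Cmod v) <> 0%C).
  { intro H. apply RtoC_inj in H. pose proof (Cmod_pos v hv). lra. }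
  split; [exact pg | split; [exact ph | split]].
  - transitivity (reduced_eq1 n x (Cmod v) (g x (Cmod v)) gx gr (h x (Cmod v)) hr * v)%C.
    + unfold eq1_lhs, reduced_eq1. rewrite gX, gV, gVb, hV, hVb. unfold Fconj, peq.
      rewrite !Cmult_conj, (Cconj_eq_Cmod_sq_div v hv). field. split; assumption.
    + rewrite e1. apply Cmult_0_l.
  - unfold eq2_rhs. rewrite <- e2.
    unfold eq2_lhs, reduced_eq2. rewrite hX, hV, hVb. unfold Fconj, peq.
    rewrite !Cmult_conj, (Cconj_eq_Cmod_sq_div v hv). field. split; assumption.
Qed.

Ltac is_Cder_auto :=
  split; simpl; unfold Rpower; auto_derive; nonzero; try solve [field; nonzero].

Ltac reduced_solution_split :=
  refine (conj _ (conj _ (conj _ (conj _ (conj _ _))))); [is_Cder_auto .. | |].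

Lemma peq_zero : peq (fun _ _ => 0%C) = fun _ _ => 0%C.
Proof.
  apply functional_extensionality; intro x; apply functional_extensionality; intro v.
  apply Cmult_0_l.
Qed.

Lemma Rpower_twice r a : 0 < r -> Rpower r (2 * a) = Rpower r a * Rpower r a.
Proof. intros. replace (2 * a) with (a + a) by ring. apply Rpower_plus. Qed.

Lemma solves_G1_H1 n k : n <> 0 -> solves n k (G1 n k) H1 D1.
Proof.
  intros hn. unfold H1. rewrite <- peq_zero. apply solves_peq.
  intros x v hv. split; [exact hv |]. pose proof (Cmod_pos v hv) as hr.
  set (r := Cmod v) in *.
  exists 0%C, (0, - k * (4 / n) * Rpower r (4 / n) / r), 0%C, 0%C.
  reduced_solution_split.
  - unfold reduced_eq1. apply injective_projections; simpl; field; lra.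
  - unfold reduced_eq2. apply injective_projections; simpl; field; lra.
Qed.

Lemma solves_G2_H2 n k C1 : n <> 0 -> C1 <> 0 -> solves n k (G2 n k C1) (H2 n C1) D2.
Proof.
  intros hn hC. apply solves_peq. intros x v [hx hv]. split; [exact hv |].
  pose proof (Cmod_pos v hv) as hr. set (r := Cmod v) in *.
  exists (- C1 * n / x ^ 2 * Rpower r (2 / n), - 2 * C1 ^ 2 / x ^ 3 * Rpower r (4 / n)),
    (C1 * n / x * (2 / n) * Rpower r (2 / n) / r,
     C1 ^ 2 / x ^ 2 * (4 / n) * Rpower r (4 / n) / r - k * (4 / n) * Rpower r (4 / n) / r),
    (0, - C1 / x ^ 2 * Rpower r (2 / n)), (0, C1 / x * (2 / n) * Rpower r (2 / n) / r).
  reduced_solution_split.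
  all: replace (4 / n) with (2 * (2 / n)) by (field; exact hn); rewrite Rpower_twice by exact hr.
  - unfold reduced_eq1. apply injective_projections; simpl; field; nonzero.
  - unfold reduced_eq2. apply injective_projections; simpl; field; nonzero.
Qed.

Lemma solves_G3_H3 k s : k < 0 -> (s = 1 \/ s = -1) -> solves (4 / 3) k (G3 k s) (H3 k s) D3.
Proof.
  intros hk hs. apply solves_peq. intros x v hv. split; [exact hv |].
  pose proof (Cmod_pos v hv) as hr. set (r := Cmod v) in *.
  assert (e3 : Rpower r (3 / 2) * Rpower r (3 / 2) = r ^ 3)
    by (rewrite <- Rpower_twice, <- Rpower_pow by exact hr; f_equal; simpl; field).
  assert (e43 : Rpower r (4 / (4 / 3)) = r ^ 3)
    by (rewrite <- Rpower_pow by exact hr; f_equal; simpl; field).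
  assert (ek : sqrt (- k) * sqrt (- k) = - k) by (apply sqrt_sqrt; lra).
  assert (es : s * s = 1) by (destruct hs as [-> | ->]; ring).
  exists 0%C, (s * (8 / 3) * sqrt (- k) * (3 / 2) * Rpower r (3 / 2) / r, - (2 * k * (3 * r ^ 2))),
    0%C, (0, s * sqrt (- k) * (3 / 2) * Rpower r (3 / 2) / r).
  reduced_solution_split.
  all: unfold reduced_eq1, reduced_eq2; rewrite ?e43; apply injective_projections; simpl;
       field_simplify_eq; nonzero.
  all: set (q := Rpower r (3 / 2)) in *; set (t := sqrt (- k)) in *; clearbody q t r;
       cbn [pow] in *; nsatz.
Qed.

Lemma solves_H4 n k s : n <> 0 -> n ^ 2 - n - 4 = 0 -> k * n < 0 -> (s = 1 \/ s = -1) ->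
  solves n k Gzero (H4 n k s) Dv0.
Proof.
  intros hn hq hkn hs. unfold Gzero. rewrite <- peq_zero. apply solves_peq.
  intros x v hv. split; [exact hv |]. pose proof (Cmod_pos v hv) as hr. set (r := Cmod v) in *.
  assert (e4 : Rpower r (4 / n) = Rpower r (2 / n) * Rpower r (2 / n))
    by (rewrite <- Rpower_twice by exact hr; f_equal; field; exact hn).
  assert (et : sqrt (- k * n / (n + 2)) * sqrt (- k * n / (n + 2)) * (n + 2) = - k * n)
    by (assert (0 < n + 2) by nra; rewrite sqrt_sqrt; [field | apply Rdiv_le_0_compat]; lra).
  assert (es : s * s = 1) by (destruct hs as [-> | ->]; ring).
  exists 0%C, 0%C, 0%C, (s * sqrt (- k * n / (n + 2)) * (2 / n) * Rpower r (2 / n) / r, 0).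
  reduced_solution_split.
  all: unfold reduced_eq1, reduced_eq2; rewrite ?e4; apply injective_projections; simpl;
       field_simplify_eq; nonzero.
  all: set (p := Rpower r (2 / n)) in *; set (t := sqrt (- k * n / (n + 2))) in *;
       clearbody p t r; clear - et es hq; cbn [pow] in *; nsatz.
Qed.

Lemma solves_H5 n k s : n <> 0 -> n ^ 2 - n - 4 = 0 -> k > 0 -> (s = 1 \/ s = -1) ->
  solves n k Gzero (H5 n k s) Dv0.
Proof.
  intros hn hq hk hs. unfold Gzero. rewrite <- peq_zero. apply solves_peq.
  intros x v hv. split; [exact hv |]. pose proof (Cmod_pos v hv) as hr. set (r := Cmod v) in *.
  assert (e4 : Rpower r (4 / n) = Rpower r (2 / n) * Rpower r (2 / n))
    by (rewrite <- Rpower_twice by exact hr; f_equal; field; exact hn).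
  assert (et : sqrt k * sqrt k = k) by (apply sqrt_sqrt; lra).
  assert (es : s * s = 1) by (destruct hs as [-> | ->]; ring).
  exists 0%C, 0%C, 0%C, (0, s * sqrt k * (2 / n) * Rpower r (2 / n) / r).
  reduced_solution_split.
  all: unfold reduced_eq1, reduced_eq2; rewrite ?e4; apply injective_projections; simpl;
       field_simplify_eq; nonzero.
  all: set (p := Rpower r (2 / n)) in *; set (t := sqrt k) in *;
       clearbody p t r; clear - et es hq; cbn [pow] in *; nsatz.
Qed.

Lemma Rpower_4_div_neg4 r : 0 < r -> Rpower r (4 / -4) = / r.
Proof. intros. replace (4 / -4) with (- (1)) by field. rewrite Rpower_Ropp, Rpower_1; auto. Qed.

Lemma solves_H6 k C1 : solves (-4) k Gzero (H6 k C1) D6.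
Proof.
  unfold Gzero. rewrite <- peq_zero. apply solves_peq.
  intros x v [hx hv]. split; [exact hv |]. pose proof (Cmod_pos v hv) as hr. set (r := Cmod v) in *.
  exists 0%C, 0%C, (- 4 * C1 / x ^ 5 / r, 0), (- (C1 / x ^ 4 + k / 4) / r ^ 2, 0).
  reduced_solution_split.
  all: unfold reduced_eq1, reduced_eq2; rewrite ?Rpower_4_div_neg4 by exact hr;
       apply injective_projections; simpl; field; nonzero.
Qed.

Lemma solves_H7 k C1 C2 : solves (-4) k Gzero (H7 k C1 C2) (D7 C1).
Proof.
  unfold Gzero. rewrite <- peq_zero. apply solves_peq.
  intros x v [hx hv]. split; [exact hv |]. pose proof (Cmod_pos v hv) as hr. set (r := Cmod v) in *.
  exists 0%C, 0%C,
    (- (6 * C1 * x ^ 5) / (1 + C1 * x ^ 6) ^ 2 * (6 + k / 4 * (C2 * x ^ 2 - 3) / r)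
       + / (1 + C1 * x ^ 6) * (k / 4 * (2 * C2 * x) / r), 0),
    (/ (1 + C1 * x ^ 6) * (- (k / 4 * (C2 * x ^ 2 - 3)) / r ^ 2) - k / 4 / r ^ 2, 0).
  reduced_solution_split.
  all: unfold reduced_eq1, reduced_eq2; rewrite ?Rpower_4_div_neg4 by exact hr;
       apply injective_projections; simpl; field; nonzero.
Qed.

(** * The case n = -4: reduction to a Riccati equation *)

Definition riccati_system (c k : R) (A B : R -> R) (x : R) : Prop :=
  exists dA dB, is_derive A x dA /\ is_derive B x dB /\
    x * dA = A x ^ 2 - 6 * A x + c / x ^ 2 /\ x * dB = A x * B x - 4 * B x + k.

Lemma solves_riccati_ansatz k c (A B : R -> R) (D : R -> C -> Prop) :
  (forall x v, D x v -> v <> 0%C /\ x <> 0 /\ riccati_system c k A B x) ->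
  solves (-4) k (peq (fun x _ => (Ci * RtoC (c / x ^ 2))%C))
    (peq (fun x r => RtoC (A x + B x / r))) D.
Proof.
  intros HD. apply solves_peq. intros x v hD.
  destruct (HD x v hD) as [hv [hx [dA [dB [hA [hB [eA eB]]]]]]]. split; [exact hv |].
  pose proof (Cmod_pos v hv) as hr. set (r := Cmod v) in *.
  exists (0, - 2 * c / x ^ 3), 0%C, (dA + dB / r, 0), (- B x / r ^ 2, 0).
  refine (conj _ (conj _ (conj _ (conj _ (conj _ _))))).
  - is_Cder_auto.
  - is_Cder_auto.
  - split; simpl; [| auto_derive; auto].
    apply (is_derive_ext (fun t => A t + / r * B t) (fun t => A t + B t / r)).
    { intro t. unfold Rdiv. f_equal. apply Rmult_comm. }
    eapply is_derive_eq; [exact (is_derive_plus _ _ _ _ _ hA (is_derive_scal B x (/ r) dB hB)) |].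
    unfold plus; simpl; field; lra.
  - is_Cder_auto.
  - unfold reduced_eq1. apply injective_projections; simpl; field; nonzero.
  - assert (ec : c = x ^ 2 * (x * dA - A x ^ 2 + 6 * A x)) by (rewrite eA; field; exact hx).
    assert (ek : k = x * dB - A x * B x + 4 * B x) by lra.
    unfold reduced_eq2. rewrite Rpower_4_div_neg4, ec, ek by exact hr.
    apply injective_projections; simpl; field; nonzero.
Qed.

Definition bessel_recurrence (sg : R) (Z2 Z3 : R -> R) (w : R) : Prop :=
  is_derive Z3 w (Z2 w - 3 / w * Z3 w) /\ is_derive Z2 w (sg * Z3 w + 2 / w * Z2 w).

Definition bessel_A (C1 : R) (Z2 Z3 : R -> R) (x : R) : R :=
  sqrt C1 * Z2 (sqrt C1 / x) / (x * Z3 (sqrt C1 / x)).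

Definition bessel_B (C1 q C4 : R) (Z2 Z3 : R -> R) (x : R) : R :=
  sqrt C1 * (q * x ^ 2 * Z2 (sqrt C1 / x) + C4) / (x * Z3 (sqrt C1 / x)).

Lemma bessel_riccati sg C1 C4 k (Z2 Z3 : R -> R) x :
  (sg = 1 \/ sg = -1) -> 0 < C1 -> 0 < x -> Z3 (sqrt C1 / x) <> 0 ->
  bessel_recurrence sg Z2 Z3 (sqrt C1 / x) ->
  riccati_system (- sg * C1) k (bessel_A C1 Z2 Z3) (bessel_B C1 (- sg * k / C1) C4 Z2 Z3) x.
Proof.
  intros hsg hC hx hZ [d3 d2].
  assert (hs : 0 < sqrt C1) by (apply sqrt_lt_R0; exact hC).
  assert (hC2 : C1 = sqrt C1 * sqrt C1) by (rewrite sqrt_sqrt; lra).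
  unfold riccati_system, bessel_A, bessel_B, Rdiv in *. set (s := sqrt C1) in *.
  pose proof (is_derive_unique (fun t : R => Z3 t) _ _ d3) as e3.
  pose proof (is_derive_unique (fun t : R => Z2 t) _ _ d2) as e2.
  eexists; eexists. split; [| split; [| split]].
  1, 2: auto_derive; [repeat split; try (eexists; eassumption); nonzero | reflexivity].
  - rewrite e3, e2, hC2. field. nonzero.
  - rewrite e3, e2, hC2. field_simplify_eq; [| nonzero]. destruct hsg as [-> | ->]; ring.
Qed.

(** * Power series of the Bessel functions *)

Definition entire (a : nat -> R) : Prop := forall x, CV_disk a x.

Lemma entire_radius a x : entire a -> Rbar_lt (Rabs x) (CV_radius a).
Proof.
  intros H. unfold CV_radius. destruct (Lub_Rbar_correct (CV_disk a)) as [ub _].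
  destruct (Lub_Rbar (CV_disk a)) as [r | |]; simpl; auto.
  - pose proof (ub (Rabs x + Rabs r + 1) (H _)) as h. simpl in h.
    pose proof (Rle_abs r). pose proof (Rabs_pos x). lra.
  - exact (ub 0 (H 0)).
Qed.

Lemma entire_le a b : (forall n, Rabs (a n) <= Rabs (b n)) -> entire b -> entire a.
Proof.
  intros H Hb x. apply (@ex_series_le R_AbsRing R_CompleteNormedModule _
                          (fun n => Rabs (b n * x ^ n))); [| apply Hb].
  intro n. change (norm (Rabs (a n * x ^ n))) with (Rabs (Rabs (a n * x ^ n))).
  rewrite Rabs_Rabsolu, !Rabs_mult. apply Rmult_le_compat_r; [apply Rabs_pos | apply H].
Qed.

Lemma entire_inv_fact : entire (fun n => / INR (fact n)).
Proof.
  intro x. exists (exp (Rabs x)). eapply is_series_ext; [| apply (is_exp_Reals (Rabs x))].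
  intro n. change (pow_n (Rabs x) n * / INR (fact n) = Rabs (/ INR (fact n) * x ^ n)).
  rewrite pow_n_pow, Rabs_mult, <- RPow_abs, (Rabs_pos_eq (/ INR (fact n))); [apply Rmult_comm |].
  apply Rlt_le, Rinv_0_lt_compat, INR_fact_lt_0.
Qed.

Lemma entire_ex_pseries a y : entire a -> ex_pseries a y.
Proof. intros H. apply CV_disk_correct, H. Qed.

Lemma entire_ex_derive a y : entire a -> ex_derive (PSeries a) y.
Proof. intros H. apply ex_derive_PSeries, entire_radius, H. Qed.

Lemma entire_Derive a y : entire a -> Derive (PSeries a) y = PSeries (PS_derive a) y.
Proof. intros H. apply Derive_PSeries, entire_radius, H. Qed.

(* The Euler operator [m + y d/dy] acts on coefficients as multiplication by [m + j]. *)
Lemma PSeries_euler_operator (a b : nat -> R) m y : entire a -> entire b ->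
  (forall j, a j = (m + INR j) * b j) ->
  PSeries a y = m * PSeries b y + y * PSeries (PS_derive b) y.
Proof.
  intros ha hb hab. set (c := PS_minus a (PS_scal m b)).
  assert (ec : PSeries c y = PSeries a y - m * PSeries b y).
  { unfold c. rewrite PSeries_minus, PSeries_scal; auto using entire_ex_pseries.
    apply ex_pseries_scal; [apply Rmult_comm | apply entire_ex_pseries, hb]. }
  assert (ed : PS_decr_1 c = PS_derive b).
  { apply functional_extensionality. intro n.
    unfold c, PS_decr_1, PS_minus, PS_scal, PS_derive. rewrite hab.
    change (scal m (b (S n))) with (m * b (S n)). unfold minus, plus, opp; simpl. ring. }
  assert (c0 : c 0%nat = 0).
  { unfold c, PS_minus, PS_scal. rewrite hab. change (scal m (b 0%nat)) with (m * b 0%nat).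
    unfold minus, plus, opp; simpl. ring. }
  rewrite PSeries_decr_1_aux, ed in ec by exact c0. lra.
Qed.

Lemma finite_sum_S f m : finite_sum f (S m) = finite_sum f m + f m.
Proof. destruct m as [| m]; [simpl; ring | apply tech5]. Qed.

Lemma psi1_S m : psi1 (S m) = psi1 m + / INR (S m).
Proof. unfold psi1. rewrite finite_sum_S. ring. Qed.

Lemma harmonic_bound m : 0 <= finite_sum (fun j => / INR (S j)) m <= INR m.
Proof.
  induction m as [| m IH]; [simpl; lra |].
  rewrite finite_sum_S, S_INR.
  assert (0 < / (INR m + 1) <= 1).
  { pose proof (pos_INR m). split; [apply Rinv_0_lt_compat; lra |].
    rewrite <- Rinv_1. apply Rinv_le_contravar; lra. }
  lra.
Qed.

Lemma psi1_bound m : Rabs (psi1 m) <= Rabs Euler_gamma + INR m.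
Proof.
  unfold psi1. pose proof (harmonic_bound m).
  eapply Rle_trans; [apply Rabs_triang |].
  rewrite Rabs_Ropp, (Rabs_pos_eq (finite_sum _ _)) by lra. lra.
Qed.

Definition bessel_coef (nu j : nat) : R := / (INR (fact j) * INR (fact (j + nu))).
Definition bessel_psi_coef (nu j : nat) : R := (psi1 j + psi1 (nu + j)) * bessel_coef nu j.

Lemma INR_fact_ge_1 n : 1 <= INR (fact n).
Proof. apply (le_INR 1), lt_O_fact. Qed.

Lemma bessel_coef_pos nu j : 0 < bessel_coef nu j.
Proof. apply Rinv_0_lt_compat, Rmult_lt_0_compat; apply INR_fact_lt_0. Qed.

Lemma bessel_coef_le_inv_fact nu j : bessel_coef nu j <= / INR (fact j).
Proof.
  pose proof (INR_fact_lt_0 j). pose proof (INR_fact_ge_1 (j + nu)).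
  apply Rinv_le_contravar; nra.
Qed.

Lemma bessel_coef_le_inv_fact_S nu j : (1 <= nu)%nat -> bessel_coef nu j <= / INR (fact (S j)).
Proof.
  intros hnu. pose proof (INR_fact_lt_0 (S j)). pose proof (INR_fact_ge_1 j).
  assert (INR (fact (S j)) <= INR (fact (j + nu))) by (apply le_INR, fact_le; lia).
  apply Rinv_le_contravar; nra.
Qed.

Lemma entire_bessel_coef nu : entire (bessel_coef nu).
Proof.
  apply (entire_le _ (fun n => / INR (fact n))); [intro j | exact entire_inv_fact].
  pose proof (bessel_coef_pos nu j). pose proof (bessel_coef_le_inv_fact nu j).
  rewrite !Rabs_pos_eq; lra.
Qed.

Lemma psi1_pair_bound nu j :
  Rabs (psi1 j + psi1 (nu + j)) <= (2 * Rabs Euler_gamma + INR nu + 2) * INR (S j).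
Proof.
  pose proof (psi1_bound j). pose proof (psi1_bound (nu + j)). pose proof (Rabs_pos Euler_gamma).
  pose proof (pos_INR j). pose proof (pos_INR nu).
  rewrite plus_INR in *. rewrite S_INR.
  eapply Rle_trans; [apply Rabs_triang |]. nra.
Qed.

Lemma entire_bessel_psi_coef nu : (1 <= nu)%nat -> entire (bessel_psi_coef nu).
Proof.
  intros hnu. set (K := 2 * Rabs Euler_gamma + INR nu + 2).
  apply (entire_le _ (PS_scal K (fun n => / INR (fact n)))).
  - intro j. unfold bessel_psi_coef, PS_scal. change (scal K (/ INR (fact j))) with (K * / INR (fact j)).
    pose proof (bessel_coef_pos nu j). pose proof (bessel_coef_le_inv_fact_S nu j hnu).
    pose proof (psi1_pair_bound nu j). pose proof (Rabs_pos (psi1 j + psi1 (nu + j))).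
    pose proof (INR_fact_lt_0 j). pose proof (pos_INR j).
    assert (hK : 0 < K) by (unfold K; pose proof (Rabs_pos Euler_gamma); pose proof (pos_INR nu); lra).
    rewrite Rabs_mult, (Rabs_pos_eq (bessel_coef nu j)), (Rabs_pos_eq (K * _)) by
      (try apply Rlt_le, Rmult_lt_0_compat, Rinv_0_lt_compat; lra).
    rewrite fact_simpl, mult_INR, Rinv_mult in *.
    apply Rle_trans with (K * INR (S j) * (/ INR (S j) * / INR (fact j))).
    + apply Rmult_le_compat; unfold K in *; lra.
    + right. field. rewrite S_INR. lra.
  - intro x. apply CV_disk_scal, entire_inv_fact.
Qed.

Lemma bessel_coef_euler mu j :
  bessel_coef mu j = (INR (S mu) + INR j) * bessel_coef (S mu) j.
Proof.
  unfold bessel_coef. rewrite <- plus_n_Sm, fact_simpl, !mult_INR, !S_INR, plus_INR.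
  pose proof (pos_INR j). pose proof (pos_INR mu). pose proof (INR_fact_lt_0 j).
  pose proof (INR_fact_lt_0 (j + mu)). field. lra.
Qed.

Lemma bessel_coef_derive nu j : PS_derive (bessel_coef nu) j = bessel_coef (S nu) j.
Proof.
  unfold PS_derive, bessel_coef. rewrite <- plus_n_Sm.
  change (S j + nu)%nat with (S (j + nu)). rewrite (fact_simpl j), mult_INR.
  pose proof (INR_fact_lt_0 j). pose proof (INR_fact_lt_0 (S (j + nu))).
  pose proof (lt_0_INR (S j) ltac:(lia)). field. lra.
Qed.

Lemma bessel_psi_coef_euler mu j :
  bessel_psi_coef mu j + bessel_coef (S mu) j = (INR (S mu) + INR j) * bessel_psi_coef (S mu) j.
Proof.
  unfold bessel_psi_coef. rewrite (bessel_coef_euler mu j).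
  replace (S mu + j)%nat with (S (mu + j)) by reflexivity. rewrite psi1_S.
  rewrite !S_INR, plus_INR. pose proof (pos_INR j). pose proof (pos_INR mu).
  field. lra.
Qed.

Lemma bessel_psi_coef_derive nu j :
  PS_derive (bessel_psi_coef nu) j = bessel_psi_coef (S nu) j + bessel_coef nu (S j).
Proof.
  unfold PS_derive, bessel_psi_coef. rewrite <- (bessel_coef_derive nu j). unfold PS_derive.
  replace (S nu + j)%nat with (nu + S j)%nat by lia. rewrite psi1_S.
  pose proof (bessel_coef_pos nu (S j)). rewrite S_INR. pose proof (pos_INR j). field. lra.
Qed.

Lemma PSeries_bessel_coef_euler mu y :
  PSeries (bessel_coef mu) y
  = INR (S mu) * PSeries (bessel_coef (S mu)) y + y * PSeries (PS_derive (bessel_coef (S mu))) y.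
Proof. apply PSeries_euler_operator; [apply entire_bessel_coef .. | apply bessel_coef_euler]. Qed.

Lemma PSeries_bessel_coef_derive nu y :
  PSeries (PS_derive (bessel_coef nu)) y = PSeries (bessel_coef (S nu)) y.
Proof. apply PSeries_ext, bessel_coef_derive. Qed.

Lemma PSeries_bessel_psi_coef_euler mu y : (1 <= mu)%nat ->
  PSeries (bessel_psi_coef mu) y
  = INR (S mu) * PSeries (bessel_psi_coef (S mu)) y
    + y * PSeries (PS_derive (bessel_psi_coef (S mu))) y - PSeries (bessel_coef (S mu)) y.
Proof.
  intros hmu.
  assert (hsum : entire (PS_plus (bessel_psi_coef mu) (bessel_coef (S mu)))).
  { intro x. apply CV_disk_plus; [apply entire_bessel_psi_coef | apply entire_bessel_coef]; auto. }
  rewrite <- (PSeries_euler_operator _ _ _ y hsum (entire_bessel_psi_coef (S mu) ltac:(lia))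
                (bessel_psi_coef_euler mu)).
  rewrite PSeries_plus by (apply entire_ex_pseries;
    first [apply entire_bessel_psi_coef; exact hmu | apply entire_bessel_coef]).
  ring.
Qed.

Lemma PSeries_bessel_coef_decr nu y : (1 <= nu)%nat ->
  PSeries (bessel_coef nu) y = bessel_coef nu 0
    + y * (PSeries (PS_derive (bessel_psi_coef nu)) y - PSeries (bessel_psi_coef (S nu)) y).
Proof.
  intros hnu. rewrite PSeries_decr_1 by apply entire_ex_pseries, entire_bessel_coef.
  rewrite <- PSeries_minus.
  - do 3 f_equal. apply functional_extensionality. intro j.
    unfold PS_decr_1, PS_minus. rewrite bessel_psi_coef_derive.
    unfold minus, plus, opp; simpl. ring.
  - apply ex_pseries_derive, entire_radius, entire_bessel_psi_coef, hnu.
  - apply entire_ex_pseries, entire_bessel_psi_coef. lia.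
Qed.

Definition bessel_series (e : R) (nu : nat) (z : R) : R :=
  (z / 2) ^ nu * PSeries (bessel_coef nu) (e * z ^ 2 / 4).

Definition bessel_second (e : R) (nu : nat) (z : R) : R :=
  ln (z / 2) * bessel_series e nu z - / 2 * (z / 2) ^ nu * PSeries (bessel_psi_coef nu) (e * z ^ 2 / 4)
  - (- e) ^ nu * / 2 * / (z / 2) ^ nu *
      finite_sum (fun j => INR (fact (nu - j - 1)) / INR (fact j) * (- e * z ^ 2 / 4) ^ j) nu.

Lemma bessel_series_Series e nu z :
  Series (fun m => e ^ m / (INR (fact m) * INR (fact (m + nu))) * (z / 2) ^ (2 * m + nu))
  = bessel_series e nu z.
Proof.
  unfold bessel_series. rewrite PSeries_eq, <- Series_scal_l. apply Series_ext. intro m.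
  change (scal (pow_n (e * z ^ 2 / 4) m) (bessel_coef nu m))
    with (pow_n (e * z ^ 2 / 4) m * bessel_coef nu m).
  replace (pow_n (e * z ^ 2 / 4) m) with ((e * z ^ 2 / 4) ^ m) by (symmetry; apply pow_n_pow).
  rewrite pow_add, pow_mult.
  replace ((z / 2) ^ 2) with (z ^ 2 / 4) by field.
  unfold bessel_coef, Rdiv. rewrite !Rpow_mult_distr. ring.
Qed.

Lemma BesselJ_series nu z : BesselJ nu z = bessel_series (-1) nu z.
Proof. apply bessel_series_Series. Qed.

Lemma BesselI_series nu z : BesselI nu z = bessel_series 1 nu z.
Proof.
  rewrite <- bessel_series_Series. apply Series_ext. intro m. rewrite pow1. unfold Rdiv. ring.
Qed.

Lemma PSeries_bessel_psi_coef_Series nu y :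
  Series (fun j => (psi1 j + psi1 (nu + j)) * y ^ j / (INR (fact j) * INR (fact (nu + j))))
  = PSeries (bessel_psi_coef nu) y.
Proof.
  rewrite PSeries_eq. apply Series_ext. intro j.
  change (scal (pow_n y j) (bessel_psi_coef nu j)) with (pow_n y j * bessel_psi_coef nu j).
  replace (pow_n y j) with (y ^ j) by (symmetry; apply pow_n_pow).
  rewrite (Nat.add_comm nu j) at 2. unfold bessel_psi_coef, bessel_coef, Rdiv. ring.
Qed.

Lemma BesselY_second nu z : BesselY nu z = 2 / PI * bessel_second (-1) nu z.
Proof.
  unfold BesselY, bessel_second. rewrite BesselJ_series, PSeries_bessel_psi_coef_Series.
  replace (- -1 * z ^ 2 / 4) with (z ^ 2 / 4) by lra.
  replace (-1 * z ^ 2 / 4) with (- z ^ 2 / 4) by lra.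
  replace (- -1) with 1 by lra. rewrite pow1.
  set (a := / (z / 2) ^ nu). field. apply PI_neq0.
Qed.

Lemma BesselK_second nu z : BesselK nu z = (-1) ^ S nu * bessel_second 1 nu z.
Proof.
  unfold BesselK, bessel_second. rewrite BesselI_series, PSeries_bessel_psi_coef_Series.
  replace (- (1) * z ^ 2 / 4) with (- z ^ 2 / 4) by lra.
  replace (1 * z ^ 2 / 4) with (z ^ 2 / 4) by lra.
  replace (- (1)) with (-1) by lra.
  assert (hs : (-1) ^ nu * (-1) ^ nu = 1).
  { rewrite <- pow_add. replace (nu + nu)%nat with (2 * nu)%nat by lia. apply pow_1_even. }
  change ((-1) ^ S nu) with (-1 * (-1) ^ nu).
  set (s := (-1) ^ nu) in *. set (a := / (z / 2) ^ nu).
  transitivity ((s * s) * / 2 * a *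
    finite_sum (fun j => INR (fact (nu - j - 1)) / INR (fact j) * (- z ^ 2 / 4) ^ j) nu
    + -1 * s * ln (z / 2) * bessel_series 1 nu z
    + s * / 2 * (z / 2) ^ nu * PSeries (bessel_psi_coef nu) (z ^ 2 / 4)).
  - rewrite hs. ring.
  - ring.
Qed.

Lemma bessel_series_recurrence e z : z <> 0 ->
  bessel_recurrence e (bessel_series e 2) (bessel_series e 3) z.
Proof.
  intros hz. unfold bessel_series. split; auto_derive;
    try (apply entire_ex_derive, entire_bessel_coef);
    rewrite entire_Derive by apply entire_bessel_coef.
  - rewrite (PSeries_bessel_coef_euler 2). simpl INR. unfold Rdiv; cbn [pow]. field. exact hz.
  - rewrite PSeries_bessel_coef_derive. unfold Rdiv; cbn [pow]. field. exact hz.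
Qed.

Lemma bessel_second_recurrence e z : (e = 1 \/ e = -1) -> 0 < z ->
  bessel_recurrence e (bessel_second e 2) (bessel_second e 3) z.
Proof.
  intros he hz. unfold bessel_second, bessel_series. unfold finite_sum; simpl sum_f_R0.
  pose proof PI_neq0. split; auto_derive.
  1, 3: repeat split; try (apply entire_ex_derive;
          first [apply entire_bessel_coef | apply entire_bessel_psi_coef; lia]); nonzero.
  all: rewrite !entire_Derive by
         first [apply entire_bessel_coef | apply entire_bessel_psi_coef; lia].
  - rewrite (PSeries_bessel_coef_euler 2), (PSeries_bessel_psi_coef_euler 2) by lia.
    simpl INR. unfold Rdiv; cbn [pow]. destruct he as [-> | ->]; field; lra.
  - unfold Rdiv; cbn [pow]. set (y := e * (z * (z * 1)) * / 4).
    rewrite PSeries_bessel_coef_derive, (PSeries_bessel_coef_decr 2 y) by lia.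
    replace (bessel_coef 2 0) with (/ 2) by (unfold bessel_coef; simpl; field).
    unfold y. destruct he as [-> | ->]; field; lra.
Qed.

Lemma peq_ext (f g : R -> R -> C) : (forall x r, f x r = g x r) -> peq f = peq g.
Proof.
  intros e. apply functional_extensionality; intro x; apply functional_extensionality; intro v.
  unfold peq. now rewrite e.
Qed.

Lemma bessel_recurrence_lincomb sg (f2 f3 g2 g3 : R -> R) a b w :
  bessel_recurrence sg f2 f3 w -> bessel_recurrence sg g2 g3 w ->
  bessel_recurrence sg (fun w => a * f2 w + b * g2 w) (fun w => a * f3 w + b * g3 w) w.
Proof.
  intros [f3' f2'] [g3' g2']. split.
  - eapply is_derive_eq;
      [exact (is_derive_plus _ _ _ _ _ (is_derive_scal _ _ a _ f3') (is_derive_scal _ _ b _ g3')) |].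
    unfold plus; simpl; ring.
  - eapply is_derive_eq;
      [exact (is_derive_plus _ _ _ _ _ (is_derive_scal _ _ a _ f2') (is_derive_scal _ _ b _ g2')) |].
    unfold plus; simpl; ring.
Qed.

Definition cylinder (e a b : R) (nu : nat) (w : R) : R :=
  a * bessel_series e nu w + b * bessel_second e nu w.

Lemma cylinder_recurrence e a b w : (e = 1 \/ e = -1) -> 0 < w ->
  bessel_recurrence e (cylinder e a b 2) (cylinder e a b 3) w.
Proof.
  intros he hw. apply bessel_recurrence_lincomb.
  - apply bessel_series_recurrence. lra.
  - apply bessel_second_recurrence; assumption.
Qed.

Lemma solves_cylinder sg k C1 C4 a b (D : R -> C -> Prop) : (sg = 1 \/ sg = -1) -> 0 < C1 ->
  (forall x v, D x v -> 0 < x /\ v <> 0%C /\ cylinder sg a b 3 (sqrt C1 / x) <> 0) ->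
  solves (-4) k (peq (fun x _ => (Ci * RtoC (- sg * C1 / x ^ 2))%C))
    (peq (fun x r => RtoC (bessel_A C1 (cylinder sg a b 2) (cylinder sg a b 3) x
       + bessel_B C1 (- sg * k / C1) C4 (cylinder sg a b 2) (cylinder sg a b 3) x / r))) D.
Proof.
  intros hsg hC HD. apply solves_riccati_ansatz. intros x v hD.
  destruct (HD x v hD) as [hx [hv hZ]]. split; [exact hv | split; [lra |]].
  apply bessel_riccati; try assumption.
  apply cylinder_recurrence; [exact hsg |].
  apply Rdiv_lt_0_compat; [apply sqrt_lt_R0 |]; assumption.
Qed.

Lemma G8_peq C1 : G8 C1 = peq (fun x _ => (Ci * RtoC (- -1 * C1 / x ^ 2))%C).
Proof. apply peq_ext; intros x r. now replace (- -1 * C1) with C1 by lra. Qed.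

Lemma cylinder_JY C2 C3 nu w :
  C2 * BesselJ nu w + C3 * BesselY nu w = cylinder (-1) C2 (2 / PI * C3) nu w.
Proof. unfold cylinder. rewrite BesselJ_series, BesselY_second. ring. Qed.

Lemma H8_peq k C1 C2 C3 C4 : H8 k C1 C2 C3 C4 =
  peq (fun x r => RtoC
    (bessel_A C1 (cylinder (-1) C2 (2 / PI * C3) 2) (cylinder (-1) C2 (2 / PI * C3) 3) x
     + bessel_B C1 (- -1 * k / C1) C4 (cylinder (-1) C2 (2 / PI * C3) 2)
         (cylinder (-1) C2 (2 / PI * C3) 3) x / r)).
Proof.
  apply peq_ext; intros x r. unfold H8, den8, bessel_A, bessel_B. rewrite !cylinder_JY.
  f_equal. unfold Rdiv. ring.
Qed.

Lemma solves_G8_H8 k C1 C2 C3 C4 : C1 > 0 -> solves (-4) k (G8 C1) (H8 k C1 C2 C3 C4) (D8 C1 C2 C3).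
Proof.
  intros hC. rewrite G8_peq, H8_peq.
  apply solves_cylinder; [right; reflexivity | exact hC |].
  intros x v [hx [hv hd]]. split; [exact hx | split; [exact hv |]].
  unfold den8 in hd. rewrite cylinder_JY in hd. intro h. apply hd. rewrite h. ring.
Qed.

Lemma Cexpi_2PI : Cexpi (2 * PI) = RtoC 1.
Proof. unfold Cexpi. rewrite cos_2PI, sin_2PI. reflexivity. Qed.

Lemma Cexpi_3PI : Cexpi (3 * PI) = RtoC (-1).
Proof.
  unfold Cexpi. replace (3 * PI) with (PI + 2 * PI) by ring.
  rewrite cos_plus, sin_plus, cos_2PI, sin_2PI, cos_PI, sin_PI.
  apply injective_projections; simpl; ring.
Qed.

(* Also for [d = 0], where both sides are [0] since [/ 0 = 0]. *)
Lemma RtoC_Cdiv (a d : R) : (RtoC a / RtoC d)%C = RtoC (a / d).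
Proof.
  destruct (Req_dec d 0) as [-> | hd]; [| now rewrite RtoC_div].
  unfold Rdiv. rewrite Rinv_0.
  apply injective_projections; simpl;
    replace (0 * (0 * 1) + 0 * (0 * 1)) with 0 by ring; unfold Rdiv; rewrite Rinv_0; ring.
Qed.

Lemma cylinder_IK2 C2 C3 w :
  C2 * BesselI 2 w + C3 * BesselK 2 w = cylinder 1 C2 (- C3) 2 w.
Proof. unfold cylinder. rewrite BesselI_series, BesselK_second. simpl pow. ring. Qed.

Lemma cylinder_IK3 C2 C3 w :
  C2 * BesselI 3 w - C3 * BesselK 3 w = cylinder 1 C2 (- C3) 3 w.
Proof. unfold cylinder. rewrite BesselI_series, BesselK_second. simpl pow. ring. Qed.

Lemma G9_peq C1 : G9 C1 = peq (fun x _ => (Ci * RtoC (- (1) * C1 / x ^ 2))%C).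
Proof.
  apply peq_ext; intros x r. unfold Rdiv.
  apply injective_projections; simpl; ring.
Qed.

Lemma H9_peq k C1 C2 C3 C4 : H9 k C1 C2 C3 C4 =
  peq (fun x r => RtoC
    (bessel_A C1 (cylinder 1 C2 (- C3) 2) (cylinder 1 C2 (- C3) 3) x
     + bessel_B C1 (- (1) * k / C1) C4 (cylinder 1 C2 (- C3) 2) (cylinder 1 C2 (- C3) 3) x / r)).
Proof.
  apply peq_ext; intros x r. unfold H9, den9, bessel_A, bessel_B.
  rewrite Cexpi_2PI, Cexpi_3PI, <- cylinder_IK2, <- cylinder_IK3.
  replace (RtoC x * (RtoC (C2 * BesselI 3 (sqrt C1 / x))
             + RtoC C3 * RtoC (-1) * RtoC (BesselK 3 (sqrt C1 / x))))%C
    with (RtoC (x * (C2 * BesselI 3 (sqrt C1 / x) - C3 * BesselK 3 (sqrt C1 / x))))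
    by (apply injective_projections; simpl; ring).
  rewrite RtoC_Cdiv. apply injective_projections; simpl; unfold Rdiv; ring.
Qed.

Lemma solves_G9_H9 k C1 C2 C3 C4 : C1 > 0 -> solves (-4) k (G9 C1) (H9 k C1 C2 C3 C4) (D9 C1 C2 C3).
Proof.
  intros hC. rewrite G9_peq, H9_peq.
  apply solves_cylinder; [left; reflexivity | exact hC |].
  intros x v [hx [hv hd]]. split; [exact hx | split; [exact hv |]].
  rewrite <- cylinder_IK3. intro h. apply hd. unfold den9. rewrite Cexpi_3PI.
  apply injective_projections; simpl; [| ring].
  replace (C2 * BesselI 3 (sqrt C1 / x)) with (C3 * BesselK 3 (sqrt C1 / x)) by lra. ring.
Qed.

Lemma peq_neq_0 (f : R -> R -> C) x v : f x (Cmod v) <> 0%C -> v <> 0%C -> peq f x v <> 0%C.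
Proof. intros. apply Cmult_neq_0; assumption. Qed.

Lemma C_neq_0_Re (c : C) : Re c <> 0 -> c <> 0%C.
Proof. intros H E. apply H. rewrite E. reflexivity. Qed.

Lemma C_neq_0_Im (c : C) : Im c <> 0 -> c <> 0%C.
Proof. intros H E. apply H. rewrite E. reflexivity. Qed.

Lemma Rpower_pos r a : 0 < Rpower r a.
Proof. apply exp_pos. Qed.

Lemma G1_nowhere_zero n k : k <> 0 -> nowhere_zero (G1 n k) D1.
Proof.
  intros hk x v hv. apply peq_neq_0; [| exact hv]. apply C_neq_0_Im. simpl.
  pose proof (Rpower_pos (Cmod v) (4 / n)). nra.
Qed.

Lemma G2_nowhere_zero n k C1 : n <> 0 -> C1 <> 0 -> nowhere_zero (G2 n k C1) D2.
Proof.
  intros hn hC x v [hx hv]. apply peq_neq_0; [| exact hv]. apply C_neq_0_Re. simpl.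
  pose proof (Rpower_pos (Cmod v) (2 / n)).
  match goal with |- ?e <> 0 => replace e with (C1 * n * / x * Rpower (Cmod v) (2 / n)) by (unfold Rdiv; ring) end.
  nonzero.
Qed.

Lemma G3_nowhere_zero k s : k < 0 -> (s = 1 \/ s = -1) -> nowhere_zero (G3 k s) D3.
Proof.
  intros hk hs x v hv. apply peq_neq_0; [| exact hv]. apply C_neq_0_Re. simpl.
  pose proof (Rpower_pos (Cmod v) (3 / 2)).
  assert (0 < sqrt (- k)) by (apply sqrt_lt_R0; lra).
  match goal with |- ?e <> 0 =>
    replace e with (s * (8 / 3 * sqrt (- k) * Rpower (Cmod v) (3 / 2))) by (unfold Rdiv; ring) end.
  destruct hs as [-> | ->]; nonzero.
Qed.

Lemma G8_nowhere_zero C1 C2 C3 : C1 > 0 -> nowhere_zero (G8 C1) (D8 C1 C2 C3).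
Proof.
  intros hC x v [hx [hv _]]. apply peq_neq_0; [| exact hv]. apply C_neq_0_Im. simpl.
  assert (0 < C1 / (x * (x * 1))) by (apply Rdiv_lt_0_compat; nra). lra.
Qed.

Lemma G9_nowhere_zero C1 C2 C3 : C1 > 0 -> nowhere_zero (G9 C1) (D9 C1 C2 C3).
Proof.
  intros hC x v [hx [hv _]]. apply peq_neq_0; [| exact hv]. apply C_neq_0_Im. simpl.
  assert (0 < C1 / (x * (x * 1))) by (apply Rdiv_lt_0_compat; nra). lra.
Qed.
Theorem proposition4p3 (n k : R) (hk : k <> 0) (hn0 : n <> 0) (hn1 : n <> 1) :
  (* 1 *)
  solves n k (G1 n k) H1 D1 /\
  (* 2 *)
  (forall C1 : R, C1 <> 0 -> solves n k (G2 n k C1) (H2 n C1) D2) /\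
  (* 3 *)
  (n = 4 / 3 -> k < 0 -> forall s : R, (s = 1 \/ s = -1) ->
     solves n k (G3 k s) (H3 k s) D3) /\
  (* 4 *)
  (n ^ 2 - n - 4 = 0 -> k * n < 0 -> forall s : R, (s = 1 \/ s = -1) ->
     solves n k Gzero (H4 n k s) Dv0) /\
  (* 5 *)
  (n ^ 2 - n - 4 = 0 -> k > 0 -> forall s : R, (s = 1 \/ s = -1) ->
     solves n k Gzero (H5 n k s) Dv0) /\
  (* 6 *)
  (n = -4 -> forall C1 : R, solves n k Gzero (H6 k C1) D6) /\
  (* 7 *)
  (n = -4 -> forall C1 C2 : R, solves n k Gzero (H7 k C1 C2) (D7 C1)) /\
  (* 8 *)
  (n = -4 -> forall C1 C2 C3 C4 : R, C1 > 0 ->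
     solves n k (G8 C1) (H8 k C1 C2 C3 C4) (D8 C1 C2 C3)) /\
  (* 9 *)
  (n = -4 -> forall C1 C2 C3 C4 : R, C1 > 0 ->
     solves n k (G9 C1) (H9 k C1 C2 C3 C4) (D9 C1 C2 C3)) /\
  (* only solutions 4-7 have G = 0: in 1, 2, 3, 8, 9 the function G vanishes nowhere *)
  nowhere_zero (G1 n k) D1 /\
  (forall C1 : R, C1 <> 0 -> nowhere_zero (G2 n k C1) D2) /\
  (n = 4 / 3 -> k < 0 -> forall s : R, (s = 1 \/ s = -1) -> nowhere_zero (G3 k s) D3) /\
  (forall C1 C2 C3 : R, C1 > 0 -> nowhere_zero (G8 C1) (D8 C1 C2 C3)) /\
  (forall C1 C2 C3 : R, C1 > 0 -> nowhere_zero (G9 C1) (D9 C1 C2 C3)).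
Proof.
  split; [now apply solves_G1_H1 |].
  split; [intros; now apply solves_G2_H2 |].
  split; [intros -> ? ? ?; now apply solves_G3_H3 |].
  split; [intros; now apply solves_H4 |].
  split; [intros; now apply solves_H5 |].
  split; [intros ->; apply solves_H6 |].
  split; [intros ->; apply solves_H7 |].
  split; [intros ->; intros; now apply solves_G8_H8 |].
  split; [intros ->; intros; now apply solves_G9_H9 |].
  split; [now apply G1_nowhere_zero |].
  split; [intros; now apply G2_nowhere_zero |].
  split; [intros _ ? ? ?; now apply G3_nowhere_zero |].
  split; [intros; now apply G8_nowhere_zero |].
  intros; now apply G9_nowhere_zero.
Qed.
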